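(* Let $\mathcal{S}$ be finite, $\Pi$ irreducible stochastic on $\mathcal{S}$, $\kappa(x,y):=\pi_{xy}-\mathbf{1}_{x=y}$, $Q=(q(y))$ the invariant distribution, and assume detailed balance $q(y)\kappa(y,z)=q(z)\kappa(z,y)$ for all $y,z$. Let $\Phi:(0,\infty)\to\mathbb{R}$ be convex, continuously differentiable with continuous strictly positive second derivative, $\Phi(1)=0$, $\varphi:=\Phi'$. Let $\boldsymbol{\ell}_t=\ell(t,\cdot)$, $\ell(t,y):=p(t,y)/q(y)$, where $p(t,\cdot)$ is the time-$t$ law of the chain with generator $\Pi-\mathrm{I}$ started from a positive initial distribution. Fix $t_0>0$, $\varepsilon>0$, a continuous curve $(\psi_t)_{t_0\le t<t_0+\varepsilon}$ of functions $\mathcal{S}\to\mathbb{R}$, and a curve $(\ell^\psi_t)_{t_0\le t<t_0+\varepsilon}$ of positive functions with $\ell^\psi_{t_0}=\boldsymbol{\ell}_{t_0}$ and $\partial_t\ell^\psi_t+\nabla\cdot(\vartheta_{\boldsymbol{\ell}_t}\nabla\psi_t)=0$; let $P^\psi(t):=(q(x)\ell^\psi_t(x))_x$. Then for $t\in[t_0,t_0+\varepsilon)$, $$\partial_tH^\Phi\big(P^\psi(t)\,|\,Q\big)=\big\langle\varphi(\ell^\psi_t),\psi_t\big\rangle_{\mathbb{H}^1_\Theta(\mathcal{S},\boldsymbol{\ell}_tQ)} .$$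
   Context: $H^\Phi(P\,|\,Q):=\sum_yq(y)\Phi(p(y)/q(y))$. $\mathcal{Z}:=\{(x,y):\kappa(x,y)>0\}$, $c(x,y):=\frac12\kappa(x,y)q(x)$, $\nabla f(x,y):=f(y)-f(x)$, $(\nabla\cdot F)(x):=\frac12\sum_{y\neq x}\kappa(x,y)[F(x,y)-F(y,x)]$. $\Theta^\Phi(a,b):=\frac{a-b}{\varphi(a)-\varphi(b)}$ for $a\ne b$, $\Theta^\Phi(b,b):=1/\Phi''(b)$; for positive $\ell$, $\vartheta_\ell(x,y):=\Theta^\Phi(\ell(x),\ell(y))$ and $\langle f,g\rangle_{\mathbb{H}^1_\Theta(\mathcal{S},\ell Q)}:=\sum_{(x,y)\in\mathcal{Z}}c(x,y)\vartheta_\ell(x,y)\nabla f(x,y)\nabla g(x,y)$. *)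

From HB Require Import structures.
From mathcomp Require Import all_boot all_order all_algebra.
From mathcomp Require Import all_classical all_reals all_analysis.
Set Implicit Arguments. Unset Strict Implicit. Unset Printing Implicit Defensive.
Import Order.TTheory GRing.Theory Num.Theory.
Import numFieldNormedType.Exports.
Local Open Scope classical_set_scope.
Local Open Scope ring_scope.

Section Defs.
Variables (R : realType) (S : finType).

Definition kappa (Pi : S -> S -> R) (x y : S) : R := Pi x y - (x == y)%:R.

Definition stochastic (Pi : S -> S -> R) : Prop :=
  (forall x y, 0 <= Pi x y) /\ (forall x, \sum_(y : S) Pi x y = 1).

Fixpoint kpow (Pi : S -> S -> R) (k : nat) : S -> S -> R :=
  match k with
  | 0%N => fun x y => (x == y)%:R
  | k'.+1 => fun x y => \sum_(z : S) kpow Pi k' x z * Pi z y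
  end.

Definition irreducible (Pi : S -> S -> R) : Prop :=
  forall x y, exists k : nat, 0 < kpow Pi k x y.

Definition Hent (Phi : R -> R) (p q : S -> R) : R :=
  \sum_(y : S) q y * Phi (p y / q y).

Definition grad (f : S -> R) (x y : S) : R := f y - f x.

Definition div (Pi : S -> S -> R) (F : S -> S -> R) (x : S) : R :=
  2^-1 * \sum_(y : S | y != x) kappa Pi x y * (F x y - F y x).

(* Theta^Phi(a,b), with phi = Phi' and phi2 = Phi'' *)
Definition Theta (phi phi2 : R -> R) (a b : R) : R :=
  if a == b then (phi2 b)^-1 else (a - b) / (phi a - phi b).

Definition vartheta (phi phi2 : R -> R) (l : S -> R) (x y : S) : R :=
  Theta phi phi2 (l x) (l y).

Definition cw (Pi : S -> S -> R) (q : S -> R) (x y : S) : R :=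
  2^-1 * kappa Pi x y * q x.

Definition H1inner (Pi : S -> S -> R) (q : S -> R) (phi phi2 : R -> R)
  (l f g : S -> R) : R :=
  \sum_(x : S) \sum_(y : S | 0 < kappa Pi x y)
     cw Pi q x y * vartheta phi phi2 l x y * grad f x y * grad g x y.

End Defs.

(* derivative of f at t relative to the set I (one-sided at endpoints) *)
Definition deriv_within (R : realType) (I : set R) (f : R -> R) (t d : R) : Prop :=
  (fun h : R => h^-1 * (f (t + h) - f t))
    @ within [set h : R | h != 0 /\ I (t + h)] (nbhs (0:R)) --> d.

From HB Require Import structures.
From mathcomp Require Import all_boot all_order all_algebra.
From mathcomp Require Import all_classical all_reals all_analysis.
From mathcomp Require Import ring.
Set Implicit Arguments. Unset Strict Implicit. Unset Printing Implicit Defensive.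
Import Order.TTheory GRing.Theory Num.Theory.
Import numFieldNormedType.Exports.
Local Open Scope classical_set_scope.
Local Open Scope ring_scope.

(** Writing the relative entropy as [sum_y q y * Phi (l y)], the chain rule
    gives [sum_y q y * phi (l y) * d_t l y = - sum_y q y * phi (l y) * div (..) y].
    Detailed balance together with the symmetry of [Theta] makes the flux
    [q x * kappa x y * Theta (l x) (l y)] symmetric, so the discrete divergence
    is minus the adjoint of the gradient in [L^2(Q)]; summing by parts yields
    the [H^1_Theta] inner product. *)

Section DerivWithin.
Variables (R : realType) (I : set R).

Let approach (t : R) := within [set h : R | h != 0 /\ I (t + h)] (nbhs (0 : R)).

Lemma deriv_within_increment_cvg0 (f : R -> R) (t d : R) :
  deriv_within I f t d ->
  (fun h => f (t + h) - f t) @ within [set h : R | h != 0 /\ I (t + h)] (nbhs (0 : R))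
    --> 0.
Proof.
move=> df; rewrite -/(approach t).
have FF : Filter (approach t) by exact: within_filter.
have hid : (fun h : R => h) @ approach t --> 0.
  by apply: cvg_within_filter; exact: cvg_id.
have -> : (fun h => f (t + h) - f t) = (fun h => h * (h^-1 * (f (t + h) - f t))).
  apply/funext => h; have [->|h0] := eqVneq h 0; first by rewrite addr0 subrr mul0r.
  by rewrite mulrA mulfV ?mul1r.
by rewrite -(mul0r d); exact: cvgM hid df.
Qed.

Lemma deriv_withinMl (c : R) (f : R -> R) (t d : R) :
  deriv_within I f t d -> deriv_within I (fun s => c * f s) t (c * d).
Proof.
move=> df.
have FF : Filter (approach t) by exact: within_filter.
rewrite /deriv_within; under eq_fun do rewrite -mulrBr mulrCA.
exact: cvgM (cvg_cst c) df.
Qed.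

Lemma deriv_within_sum (S : finType) (f : S -> R -> R) (t : R) (d : S -> R) :
  (forall y, deriv_within I (f y) t (d y)) ->
  deriv_within I (fun s => \sum_(y : S) f y s) t (\sum_(y : S) d y).
Proof.
move=> df.
have FF : Filter (approach t) by exact: within_filter.
rewrite /deriv_within; under eq_fun do rewrite -sumrB mulr_sumr.
by apply: cvg_big => // [|y _]; [exact: (@add_continuous R) | exact: df].
Qed.

End DerivWithin.

(** Caratheodory's form of the derivative; it spares the chain rule a division
    by [f (t + h) - f t], which may vanish. *)
Lemma is_derive_slope_cvg (R : realType) (Phi : R -> R) (a dphi : R) :
  is_derive a (1 : R) Phi dphi ->
  (fun k : R => if k == 0 then dphi else k^-1 * (Phi (a + k) - Phi a)) @ (0 : R)
    --> dphi.
Proof.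
move=> [dPhi <-]; set g := fun k : R => _.
have g0 : g 0 = 'D_1 Phi a by rewrite /g eqxx.
rewrite -g0; apply/continuous_withinNx; rewrite g0.
apply: cvg_trans dPhi; apply: near_eq_cvg; near=> k.
have k0 : k != 0 by near: k; exact: nbhs_dnbhs_neq.
by rewrite /g (negbTE k0) /= /GRing.scale /= mulr1 (addrC k a).
Unshelve. all: by end_near. Qed.

Lemma deriv_within_comp (R : realType) (I : set R) (Phi f : R -> R) (t d dphi : R) :
  is_derive (f t) (1 : R) Phi dphi -> deriv_within I f t d ->
  deriv_within I (fun s => Phi (f s)) t (dphi * d).
Proof.
move=> dPhi df.
have slope := is_derive_slope_cvg dPhi; set G := fun k : R => _ in slope.
rewrite /deriv_within.
have -> : (fun h => h^-1 * (Phi (f (t + h)) - Phi (f t))) =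
          (fun h => G (f (t + h) - f t) * (h^-1 * (f (t + h) - f t))).
  apply/funext => h; rewrite /G; have [/eqP|fh] := eqVneq (f (t + h) - f t) 0.
    by rewrite subr_eq0 => /eqP ->; rewrite !subrr !mulr0.
  by rewrite [f t + _]addrC subrK mulrCA mulrAC mulVf // mul1r.
exact: cvgM (cvg_comp _ _ (deriv_within_increment_cvg0 df) slope) df.
Qed.

Section SummationByParts.
Variables (R : realType) (S : finType).

Lemma sum_sym_grad_grad (w : S -> S -> R) (f g : S -> R) :
  (forall x y, w x y = w y x) ->
  \sum_x \sum_y w x y * grad f x y * grad g x y =
  - 2 * \sum_x f x * \sum_y w x y * grad g x y.
Proof.
move=> wC.
have swap : \sum_x \sum_y w x y * f y * grad g x y =
            - \sum_x f x * \sum_y w x y * grad g x y.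
  rewrite exchange_big -sumrN; apply: eq_bigr => x _.
  rewrite mulr_sumr -sumrN; apply: eq_bigr => y _.
  by rewrite wC /grad; ring.
have -> : \sum_x \sum_y w x y * grad f x y * grad g x y =
   \sum_x \sum_y w x y * f y * grad g x y - \sum_x f x * \sum_y w x y * grad g x y.
  rewrite -sumrB; apply: eq_bigr => x _.
  rewrite mulr_sumr -sumrB; apply: eq_bigr => y _; rewrite /grad; ring.
by rewrite swap; ring.
Qed.

Variables (Pi : S -> S -> R) (q : S -> R) (phi phi2 : R -> R).

Lemma vartheta_sym (l : S -> R) (x y : S) :
  vartheta phi phi2 l x y = vartheta phi phi2 l y x.
Proof.
rewrite /vartheta /Theta eq_sym; case: eqVneq => [->|_] //.
by rewrite -(opprB (l x)) -(opprB (phi (l x))) invrN mulrNN.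
Qed.

Lemma div_sym_flux (V : S -> S -> R) (g : S -> R) (x : S) :
  (forall x y, V x y = V y x) ->
  div Pi (fun y z => V y z * grad g y z) x =
  \sum_y kappa Pi x y * V x y * grad g x y.
Proof.
move=> VC; rewrite /div big_mkcond mulr_sumr; apply: eq_bigr => y _ /=.
have [->|_] /= := eqVneq y x; first by rewrite /grad subrr !mulr0.
by rewrite VC /grad; field.
Qed.

Lemma H1inner_full_sum (l f g : S -> R) :
  (forall x y, 0 <= Pi x y) ->
  H1inner Pi q phi phi2 l f g =
  \sum_x \sum_y cw Pi q x y * vartheta phi phi2 l x y * grad f x y * grad g x y.
Proof.
move=> Pi_ge0; apply: eq_bigr => x _; rewrite big_mkcond.
apply: eq_bigr => y _ /=; case: ifP => // kappa_le0.
have [<-|xy] := eqVneq x y; first by rewrite /grad !(subrr, mulr0, mul0r).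
suff kappa0 : kappa Pi x y = 0 by rewrite /cw kappa0 !(mulr0, mul0r).
apply/eqP; rewrite eq_le leNgt kappa_le0 /kappa (negbTE xy) subr0.
exact: Pi_ge0.
Qed.

Lemma H1inner_by_parts (l f g : S -> R) :
  (forall x y, 0 <= Pi x y) ->
  (forall y z, q y * kappa Pi y z = q z * kappa Pi z y) ->
  \sum_x q x * (f x * - div Pi (fun y z => vartheta phi phi2 l y z * grad g y z) x) =
  H1inner Pi q phi phi2 l f g.
Proof.
move=> Pi_ge0 balance.
pose w x y := q x * kappa Pi x y * vartheta phi phi2 l x y.
have wC x y : w x y = w y x by rewrite /w balance vartheta_sym.
have -> : H1inner Pi q phi phi2 l f g =
          2^-1 * \sum_x \sum_y w x y * grad f x y * grad g x y.
  rewrite H1inner_full_sum // mulr_sumr; apply: eq_bigr => x _.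
  by rewrite mulr_sumr; apply: eq_bigr => y _; rewrite /cw /w; ring.
rewrite sum_sym_grad_grad // mulrA mulrN mulVf ?pnatr_eq0 // mulN1r -sumrN.
apply: eq_bigr => x _; rewrite div_sym_flux; last exact: vartheta_sym.
rewrite !mulrN !mulr_sumr; congr (- _); apply: eq_bigr => y _.
by rewrite /w; ring.
Qed.

End SummationByParts.

Lemma Hent_density (R : realType) (S : finType) (Phi : R -> R) (q l : S -> R) :
  Hent Phi (fun x => q x * l x) q = \sum_y q y * Phi (l y).
Proof.
apply: eq_bigr => y _; have [->|q0] := eqVneq (q y) 0; first by rewrite !mul0r.
by rewrite mulrAC mulfV ?mul1r.
Qed.

Theorem proposition8p4 (R : realType) (S : finType) (Pi : S -> S -> R)
  (q : S -> R) (Phi phi phi2 : R -> R) (p0 : S -> R) (p : R -> S -> R)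
  (t0 eps : R) (psi lpsi : R -> S -> R) :
  stochastic Pi -> irreducible Pi ->
  (* Q is the invariant distribution *)
  (forall y, 0 <= q y) -> \sum_(y : S) q y = 1 ->
  (forall y, \sum_(x : S) q x * Pi x y = q y) ->
  (* detailed balance *)
  (forall y z, q y * kappa Pi y z = q z * kappa Pi z y) ->
  (* Phi convex on (0,oo), C^1 with continuous, strictly positive second derivative *)
  (forall x y a : R, 0 < x -> 0 < y -> 0 <= a <= 1 ->
     Phi (a * x + (1 - a) * y) <= a * Phi x + (1 - a) * Phi y) ->
  (forall x : R, 0 < x -> is_derive x 1 Phi (phi x)) ->
  (forall x : R, 0 < x -> is_derive x 1 phi (phi2 x)) ->
  (forall x : R, 0 < x -> {for x, continuous phi2}) ->
  (forall x : R, 0 < x -> 0 < phi2 x) ->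
  Phi 1 = 0 ->
  (* p(t,.) is the time-t law of the chain with generator Pi - I, started at p0 > 0 *)
  (forall x, 0 < p0 x) -> \sum_(x : S) p0 x = 1 ->
  (forall y, p 0 y = p0 y) ->
  (forall (t : R) y, 0 <= t ->
     deriv_within `[0, +oo[ (fun s => p s y) t (\sum_(x : S) p t x * kappa Pi x y)) ->
  (* the curves psi and l^psi *)
  0 < t0 -> 0 < eps ->
  (forall x, {within `[t0, t0 + eps[, continuous (fun t => psi t x)}) ->
  (forall (t : R) x, t0 <= t < t0 + eps -> 0 < lpsi t x) ->
  (forall x, lpsi t0 x = p t0 x / q x) ->
  (forall (t : R) x, t0 <= t < t0 + eps ->
     deriv_within `[t0, t0 + eps[ (fun s => lpsi s x) t
       (- div Pi (fun y z => vartheta phi phi2 (fun w => p t w / q w) y z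
                              * grad (psi t) y z) x)) ->
  forall t : R, t0 <= t < t0 + eps ->
    deriv_within `[t0, t0 + eps[
      (fun s => Hent Phi (fun x => q x * lpsi s x) q) t
      (H1inner Pi q phi phi2 (fun w => p t w / q w)
         (fun x => phi (lpsi t x)) (psi t)).
Proof.
move=> [Pi_ge0 _] _ _ _ _ balance _ dPhi _ _ _ _ _ _ _ _ _ _ _ lpsi_gt0 _ dlpsi t ht.
have -> : (fun s => Hent Phi (fun x => q x * lpsi s x) q) =
          (fun s => \sum_y q y * Phi (lpsi s y)).
  by apply/funext => s; exact: Hent_density.
rewrite -H1inner_by_parts //; apply: deriv_within_sum => y.
apply: deriv_withinMl; apply: deriv_within_comp; last exact: dlpsi.
exact/dPhi/lpsi_gt0.
Qed.
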